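(* Let $(\omega_0,\rho_0)$ be a half-flat $H^{\varepsilon,\tau}$-structure on the Lie algebra $\mathfrak h_3\oplus\mathfrak h_3$ with $\omega_0(\mathfrak z,\mathfrak z)=0$, $\mathfrak z$ the centre. Then the solution $(\omega(t),\rho(t))$ of the evolution equations $\dot\rho=d\omega$, $\dot\sigma=d\hat\rho$ ($\sigma=\frac12\omega^2$) with initial value $(\omega_0,\rho_0)$ is affine linear, \[ \sigma(t)=\tfrac12\omega_0^2+t\,d\hat\rho_0,\qquad \rho(t)=\rho_0+t\,d\omega_0,\] and is defined (with $\omega(t)$ nondegenerate and $\rho(t)$ stable) for all $t\in\mathbb R$.
   Context: $\mathfrak h_3$ is the three-dimensional Heisenberg Lie algebra; forms on a Lie algebra carry the Chevalley–Eilenberg differential $d$. For a stable three-form $\rho$ on an oriented six-dimensional space: $K_\rho(v)=\kappa((v\lrcorner\rho)\wedge\rho)$ ($\kappa$ canonical), $\lambda(\rho)=\frac16\mathrm{tr}K_\rho^2$, $\phi(\rho)=\sqrt{|\lambda(\rho)|}$, $J_\rho=K_\rho/\phi(\rho)$, and $\hat\rho$ is defined by $d\phi_\rho(\beta)=\hat\rho\wedge\beta$ (it equals $J_\rho^*\rho$). An $H^{\varepsilon,\tau}$-structure on a Lie algebra is a compatible normalised pair $(\omega,\rho)$ ($\omega$ nondegenerate, $\rho$ stable, $\omega\wedge\rho=0$, $J_\rho^*\rho\wedge\rho=\frac23\omega^3$, orientation by $\omega^3$), of type ${\rm SU}(3)$, ${\rm SU}(1,2)$ or ${\rm SL}(3,\mathbb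 R)$; it is half-flat if $d\rho=0$ and $d(\omega^2)=0$. *)

From Stdlib Require Import Reals Arith List.
Import ListNotations.
Open Scope R_scope.

(** Basis e_0..e_5 of the Lie algebra, dual basis e^0..e^5.
  A form is a coefficient function [nat -> R] on bitmasks S < 64:
  alpha = sum_S alpha(S) e^S, with e^S = e^{s1} /\ ... /\ e^{sk}, s1<...<sk
  the elements of S.  Only masks S < 64 are meaningful; forms are compared
  with [feq] (equality on all masks < 64). *)

Definition Form := nat -> R.
Definition Vec := nat -> R.   (* components 0..5 *)

Definition masks : list nat := seq 0 64.
Definition idx : list nat := seq 0 6.

Definition sumL (f : nat -> R) (l : list nat) : R :=
  fold_right (fun x acc => f x + acc) 0 l.

Definition bits (S : nat) : list nat := filter (fun i => Nat.testbit S i) idx.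
Definition popcount (S : nat) : nat := length (bits S).

Definition feq (a b : Form) : Prop := forall S, (S < 64)%nat -> a S = b S.
Definition isForm (k : nat) (a : Form) : Prop :=
  forall S, (S < 64)%nat -> popcount S <> k -> a S = 0.

Definition fzero : Form := fun _ => 0.
Definition fadd (a b : Form) : Form := fun S => a S + b S.
Definition fscale (c : R) (a : Form) : Form := fun S => c * a S.

(** sign of e^A /\ e^B = sign * e^(A u B) for disjoint A, B *)
Definition inversions (A B : nat) : nat :=
  length (filter (fun p => Nat.ltb (snd p) (fst p)) (list_prod (bits A) (bits B))).

Definition wedge (a b : Form) : Form := fun S =>
  sumL (fun A => if Nat.eqb (Nat.land A S) A
                 then (-1) ^ (inversions A (S - A)%nat) * a A * b (S - A)%nat
                 else 0) masks.

(** interior product (v _| alpha)(x2,..,xk) = alpha(v,x2,..,xk) *)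
Definition interior (v : Vec) (a : Form) : Form := fun S =>
  sumL (fun i => if Nat.testbit S i then 0
                 else v i * (-1) ^ (length (filter (fun j => Nat.ltb j i) (bits S)))
                      * a (S + 2 ^ i)%nat) idx.

Definition eval2 (w : Form) (v u : Vec) : R := interior u (interior v w) 0%nat.

Definition ebasis (j : nat) : Vec := fun i => if Nat.eqb i j then 1%R else 0%R.

(** * The Lie algebra h3 (+) h3 : [e0,e1] = e2, [e3,e4] = e5 *)
Definition cst (i j k : nat) : R :=
  match i, j, k with
  | 0%nat, 1%nat, 2%nat => 1 | 1%nat, 0%nat, 2%nat => -1
  | 3%nat, 4%nat, 5%nat => 1 | 4%nat, 3%nat, 5%nat => -1
  | _, _, _ => 0 end.

Definition bracket (v w : Vec) : Vec := fun k =>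
  sumL (fun i => sumL (fun j => cst i j k * v i * w j) idx) idx.

Definition inCentre (z : Vec) : Prop :=
  forall y k, (k < 6)%nat -> bracket z y k = 0.

(** * Chevalley--Eilenberg differential
   On 1-forms: d alpha (x,y) = - alpha([x,y]); extended as an
   antiderivation (Leibniz rule) to all forms. *)
Definition mono (l : list nat) : Form := fun S =>
  if Nat.eqb S (fold_right (fun i acc => (2 ^ i + acc)%nat) 0%nat l) then 1 else 0.

Definition d1 (k : nat) : Form := fun S =>
  match bits S with
  | [i; j] => - cst i j k
  | _ => 0 end.

Fixpoint dmono (l : list nat) : Form :=
  match l with
  | [] => fzero
  | i :: l' => fadd (wedge (d1 i) (mono l')) (fscale (-1) (wedge (mono [i]) (dmono l')))
  end.

Definition dF (a : Form) : Form := fun T =>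
  sumL (fun S => a S * dmono (bits S) T) masks.

(** * Stable three-forms and Hitchin's functional
   Reference volume form nu = e^{012345} (mask 63).  With respect to nu,
   kappa(xi) = w (x) nu where w _| nu = xi, so
   K_rho(v) = w with w_i = (-1)^i ((v _| rho) /\ rho)(63 - 2^i). *)
Definition Kmat (rho : Form) (i j : nat) : R :=
  (-1) ^ i * wedge (interior (ebasis j) rho) rho (63 - 2 ^ i)%nat.

(** lambda(rho) = 1/6 tr K_rho^2, as the coefficient of nu (x) nu *)
Definition lam (rho : Form) : R :=
  / 6 * sumL (fun i => sumL (fun j => Kmat rho i j * Kmat rho j i) idx) idx.

Definition stable (rho : Form) : Prop := lam rho <> 0.

Definition cube (w : Form) : Form := wedge w (wedge w w).

Definition orient (w : Form) : R :=
  if Rlt_dec 0 (cube w 63%nat) then 1 else -1.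

Definition phi (w rho : Form) : R := orient w * sqrt (Rabs (lam rho)).

Definition IsHat (w rho rh : Form) : Prop :=
  isForm 3 rh /\
  forall beta, isForm 3 beta ->
    derivable_pt_lim (fun s => phi w (fadd rho (fscale s beta))) 0
                     (wedge rh beta 63%nat).

Definition nondeg (w : Form) : Prop :=
  forall v : Vec, (forall u : Vec, eval2 w v u = 0) -> forall i, (i < 6)%nat -> v i = 0.

Definition HStructure (w rho : Form) : Prop :=
  isForm 2 w /\ isForm 3 rho /\ nondeg w /\ stable rho /\
  feq (wedge w rho) fzero /\
  exists rh, IsHat w rho rh /\ feq (wedge rh rho) (fscale (2/3) (cube w)).

Definition HalfFlat (w rho : Form) : Prop :=
  feq (dF rho) fzero /\ feq (dF (wedge w w)) fzero.

Definition sigma4 (w : Form) : Form := fscale (1/2) (wedge w w).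

From Pilot Require Import Defs.
From Stdlib Require Import Reals Arith List Lia Lra ZArith FunctionalExtensionality.
Import ListNotations.
Open Scope R_scope.

(* The proof writes the solution down,
     rho(t) = rho0 + t d omega0,      omega(t) = omega0 + t (k / m) eta,
   where eta = alpha /\ beta is built from e2 _| omega0 and e5 _| omega0,
   omega0 /\ eta = m e^0134 (m <> 0) and d rhohat0 = k e^0134.
   - omega0(e2, e5) = 0 puts d omega0 in the span U3 of e^013, e^014, e^034,
     e^134; d rho0 = 0 kills the coefficients of rho0 divisible by e^25.
   - Hitchin's quartic lambda is invariant under rho -> rho + t gamma for
     such rho and gamma (one polynomial identity). *)

Lemma sumL_ext (f g : nat -> R) (l : list nat) :
  (forall x, In x l -> f x = g x) -> sumL f l = sumL g l.
Proof.
  induction l as [|a l IH]; simpl; intros H; [reflexivity|].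
  rewrite (H a (or_introl eq_refl)), IH; auto.
Qed.

Lemma sumL_plus (f g : nat -> R) (l : list nat) :
  sumL (fun x => f x + g x) l = sumL f l + sumL g l.
Proof. induction l; simpl; [lra|]. rewrite IHl; lra. Qed.

Lemma sumL_scal (c : R) (f : nat -> R) (l : list nat) :
  sumL (fun x => c * f x) l = c * sumL f l.
Proof. induction l; simpl; [lra|]. rewrite IHl; lra. Qed.

(* A sum whose terms vanish off one index is that term; stated for any
   additive monoid, since it is used both over [R] and over [Z]. *)
Section SingleTerm.
Variables (A : Type) (add : A -> A -> A) (zero : A).
Hypothesis add0l : forall x, add zero x = x.
Hypothesis add0r : forall x, add x zero = x.

Lemma fold_zero (f : nat -> A) (l : list nat) :
  (forall x, In x l -> f x = zero) -> fold_right (fun x acc => add (f x) acc) zero l = zero.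
Proof.
  induction l as [|a l IH]; simpl; intros H; [reflexivity|].
  rewrite H, IH; auto.
Qed.

Lemma fold_single (f : nat -> A) (l : list nat) (k : nat) :
  NoDup l -> In k l -> (forall x, In x l -> x <> k -> f x = zero) ->
  fold_right (fun x acc => add (f x) acc) zero l = f k.
Proof.
  induction l as [|a l IH]; intros Hnd Hk Hf; [destruct Hk|].
  inversion Hnd as [|? ? Hal Hl]; subst; simpl.
  destruct (Nat.eq_dec a k) as [->|Hne].
  - rewrite fold_zero, add0r; [reflexivity|].
    intros x Hx; apply Hf; [now right|]; intros ->; contradiction.
  - rewrite (Hf a (or_introl eq_refl) Hne), add0l.
    apply IH; auto; [destruct Hk; [contradiction|auto]|].
    intros x Hx; apply Hf; now right.
Qed.
End SingleTerm.

Lemma in_masks (S : nat) : In S masks <-> (S < 64)%nat.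
Proof. unfold masks; rewrite in_seq; lia. Qed.

Lemma in_idx (i : nat) : In i idx <-> (i < 6)%nat.
Proof. unfold idx; rewrite in_seq; lia. Qed.

Lemma sumL_single (f : nat -> R) (k : nat) :
  (k < 64)%nat -> (forall x, (x < 64)%nat -> x <> k -> f x = 0) -> sumL f masks = f k.
Proof.
  intros Hk Hf. apply (fold_single R Rplus 0); try (intros; ring).
  - apply seq_NoDup.
  - now apply in_masks.
  - intros x Hx; apply Hf; now apply in_masks.
Qed.

Lemma forallb_seq (p : nat -> bool) (n : nat) :
  forallb p (seq 0 n) = true -> forall x, (x < n)%nat -> p x = true.
Proof. intros H x Hx. rewrite forallb_forall in H. apply H. rewrite in_seq; lia. Qed.

Lemma feq_refl (a : Form) : feq a a.
Proof. intros S _; reflexivity. Qed.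

Lemma fadd_ext (a a' b b' : Form) : feq a a' -> feq b b' -> feq (fadd a b) (fadd a' b').
Proof. intros Ha Hb S HS. unfold fadd. rewrite Ha, Hb; auto. Qed.

Lemma fscale_ext (k : R) (a a' : Form) : feq a a' -> feq (fscale k a) (fscale k a').
Proof. intros Ha S HS. unfold fscale. rewrite Ha; auto. Qed.

Lemma wedge_ext (a a' b b' : Form) : feq a a' -> feq b b' -> feq (wedge a b) (wedge a' b').
Proof.
  intros Ha Hb T HT. unfold wedge. apply sumL_ext. intros A HA%in_masks.
  destruct (Nat.eqb (Nat.land A T) A); [|reflexivity].
  rewrite Ha, Hb by lia. reflexivity.
Qed.

Lemma cube_ext (w w' : Form) : feq w w' -> feq (cube w) (cube w').
Proof. intros H. unfold cube. auto using wedge_ext. Qed.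

Lemma bit_add_lt (S i : nat) :
  (S < 64)%nat -> (i < 6)%nat -> Nat.testbit S i = false -> (S + 2 ^ i < 64)%nat.
Proof.
  revert S i.
  assert (H : forallb (fun S => forallb (fun i =>
     orb (Nat.testbit S i) (Nat.ltb (S + 2 ^ i) 64)) (seq 0 6)) (seq 0 64) = true)
    by (vm_compute; reflexivity).
  intros S i HS Hi Hb. pose proof (forallb_seq _ _ (forallb_seq _ _ H S HS) i Hi) as G.
  cbv beta in G. rewrite Hb in G. now apply Nat.ltb_lt.
Qed.

(* [Defs.interior] is qualified: [Reals] also exports a topological [interior]. *)
Lemma interior_ext (v : Vec) (a b : Form) : feq a b -> feq (Defs.interior v a) (Defs.interior v b).
Proof.
  intros H S HS. unfold Defs.interior. apply sumL_ext. intros i Hi%in_idx.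
  destruct (Nat.testbit S i) eqn:E; [reflexivity|]. rewrite H; auto using bit_add_lt.
Qed.

Lemma eval2_ext (w w' : Form) (v u : Vec) : feq w w' -> eval2 w v u = eval2 w' v u.
Proof.
  intros H. unfold eval2. apply interior_ext; [|lia]. now apply interior_ext.
Qed.

Lemma Kmat_ext (r r' : Form) (i j : nat) : feq r r' -> Kmat r i j = Kmat r' i j.
Proof.
  intros H. unfold Kmat. f_equal. apply wedge_ext; auto; [|lia]. now apply interior_ext.
Qed.

Lemma dF_ext (a b : Form) (T : nat) : feq a b -> dF a T = dF b T.
Proof.
  intros H. unfold dF. apply sumL_ext. intros S HS%in_masks. now rewrite H.
Qed.

Lemma wedge_addr (a b c : Form) (T : nat) : wedge a (fadd b c) T = wedge a b T + wedge a c T.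
Proof.
  unfold wedge, fadd. rewrite <- sumL_plus. apply sumL_ext. intros A _.
  destruct (Nat.eqb (Nat.land A T) A); ring.
Qed.

Lemma wedge_scalr (k : R) (a b : Form) (T : nat) : wedge a (fscale k b) T = k * wedge a b T.
Proof.
  unfold wedge, fscale. rewrite <- sumL_scal. apply sumL_ext. intros A _.
  destruct (Nat.eqb (Nat.land A T) A); ring.
Qed.

Lemma dF_add (a b : Form) (T : nat) : dF (fadd a b) T = dF a T + dF b T.
Proof. unfold dF, fadd. rewrite <- sumL_plus. apply sumL_ext. intros; ring. Qed.

Lemma dF_scal (k : R) (a : Form) (T : nat) : dF (fscale k a) T = k * dF a T.
Proof. unfold dF, fscale. rewrite <- sumL_scal. apply sumL_ext. intros; ring. Qed.

Lemma isForm_line (k : nat) (a b : Form) (s : R) :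
  isForm k a -> isForm k b -> isForm k (fadd a (fscale s b)).
Proof. intros Ha Hb S HS Hp. unfold fadd, fscale. rewrite Ha, Hb; auto. ring. Qed.

Definition supported (p : nat -> bool) (a : Form) : Prop :=
  forall S, (S < 64)%nat -> p S = false -> a S = 0.

Definition restrict (p : nat -> bool) (a : Form) : Form := fun S => if p S then a S else 0.

Lemma restrict_feq (p : nat -> bool) (a : Form) : supported p a -> feq a (restrict p a).
Proof. intros H S HS. unfold restrict. destruct (p S) eqn:E; auto. Qed.

Lemma isForm_supported (k : nat) (a : Form) :
  isForm k a -> supported (fun S => Nat.eqb (popcount S) k) a.
Proof. intros H S HS Hp. apply H; auto. now apply Nat.eqb_neq. Qed.

Lemma supported_and (p q : nat -> bool) (a : Form) :
  supported p a -> supported q a -> supported (fun S => andb (p S) (q S)) a.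
Proof.
  intros Hp Hq S HS H. destruct (p S) eqn:E; [apply Hq|apply Hp]; auto.
Qed.

Lemma supported_none (a : Form) : supported (fun _ => false) a -> feq a fzero.
Proof. intros H S HS. now apply H. Qed.

(** On a 3-form r the matrix [Kmat r] is quadratic in the 20 coefficients of r;
  [Kq] is its expanded normal form, checked entry by entry against the
  definition. *)

Definition Kq (r : Form) (i j : nat) : R :=
  match i, j with
  | 0%nat, 0%nat =>
      r 7%nat * r 56%nat - r 11%nat * r 52%nat + r 13%nat * r 50%nat
      + r 14%nat * r 49%nat + r 19%nat * r 44%nat - r 21%nat * r 42%nat
      - r 22%nat * r 41%nat + r 25%nat * r 38%nat + r 26%nat * r 37%nat
      - r 28%nat * r 35%nat
  | 0%nat, 1%nat =>
      2 * r 14%nat * r 50%nat - 2 * r 22%nat * r 42%nat + 2 * r 26%nat * r 38%nat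
  | 0%nat, 2%nat =>
      2 * r 14%nat * r 52%nat - 2 * r 22%nat * r 44%nat + 2 * r 28%nat * r 38%nat
  | 0%nat, 3%nat =>
      2 * r 14%nat * r 56%nat - 2 * r 26%nat * r 44%nat + 2 * r 28%nat * r 42%nat
  | 0%nat, 4%nat =>
      2 * r 22%nat * r 56%nat - 2 * r 26%nat * r 52%nat + 2 * r 28%nat * r 50%nat
  | 0%nat, 5%nat =>
      2 * r 38%nat * r 56%nat - 2 * r 42%nat * r 52%nat + 2 * r 44%nat * r 50%nat
  | 1%nat, 0%nat =>
      - 2 * r 13%nat * r 49%nat + 2 * r 21%nat * r 41%nat - 2 * r 25%nat * r 37%nat
  | 1%nat, 1%nat =>
      r 7%nat * r 56%nat - r 11%nat * r 52%nat - r 13%nat * r 50%nat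
      - r 14%nat * r 49%nat + r 19%nat * r 44%nat + r 21%nat * r 42%nat
      + r 22%nat * r 41%nat - r 25%nat * r 38%nat - r 26%nat * r 37%nat
      - r 28%nat * r 35%nat
  | 1%nat, 2%nat =>
      - 2 * r 13%nat * r 52%nat + 2 * r 21%nat * r 44%nat - 2 * r 28%nat * r 37%nat
  | 1%nat, 3%nat =>
      - 2 * r 13%nat * r 56%nat + 2 * r 25%nat * r 44%nat - 2 * r 28%nat * r 41%nat
  | 1%nat, 4%nat =>
      - 2 * r 21%nat * r 56%nat + 2 * r 25%nat * r 52%nat - 2 * r 28%nat * r 49%nat
  | 1%nat, 5%nat =>
      - 2 * r 37%nat * r 56%nat + 2 * r 41%nat * r 52%nat - 2 * r 44%nat * r 49%nat
  | 2%nat, 0%nat =>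
      2 * r 11%nat * r 49%nat - 2 * r 19%nat * r 41%nat + 2 * r 25%nat * r 35%nat
  | 2%nat, 1%nat =>
      2 * r 11%nat * r 50%nat - 2 * r 19%nat * r 42%nat + 2 * r 26%nat * r 35%nat
  | 2%nat, 2%nat =>
      r 7%nat * r 56%nat + r 11%nat * r 52%nat + r 13%nat * r 50%nat
      - r 14%nat * r 49%nat - r 19%nat * r 44%nat - r 21%nat * r 42%nat
      + r 22%nat * r 41%nat - r 25%nat * r 38%nat + r 26%nat * r 37%nat
      + r 28%nat * r 35%nat
  | 2%nat, 3%nat =>
      2 * r 11%nat * r 56%nat - 2 * r 25%nat * r 42%nat + 2 * r 26%nat * r 41%nat
  | 2%nat, 4%nat =>
      2 * r 19%nat * r 56%nat - 2 * r 25%nat * r 50%nat + 2 * r 26%nat * r 49%nat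
  | 2%nat, 5%nat =>
      2 * r 35%nat * r 56%nat - 2 * r 41%nat * r 50%nat + 2 * r 42%nat * r 49%nat
  | 3%nat, 0%nat =>
      - 2 * r 7%nat * r 49%nat + 2 * r 19%nat * r 37%nat - 2 * r 21%nat * r 35%nat
  | 3%nat, 1%nat =>
      - 2 * r 7%nat * r 50%nat + 2 * r 19%nat * r 38%nat - 2 * r 22%nat * r 35%nat
  | 3%nat, 2%nat =>
      - 2 * r 7%nat * r 52%nat + 2 * r 21%nat * r 38%nat - 2 * r 22%nat * r 37%nat
  | 3%nat, 3%nat =>
      - r 7%nat * r 56%nat - r 11%nat * r 52%nat + r 13%nat * r 50%nat
      - r 14%nat * r 49%nat - r 19%nat * r 44%nat + r 21%nat * r 42%nat
      - r 22%nat * r 41%nat + r 25%nat * r 38%nat - r 26%nat * r 37%nat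
      + r 28%nat * r 35%nat
  | 3%nat, 4%nat =>
      - 2 * r 19%nat * r 52%nat + 2 * r 21%nat * r 50%nat - 2 * r 22%nat * r 49%nat
  | 3%nat, 5%nat =>
      - 2 * r 35%nat * r 52%nat + 2 * r 37%nat * r 50%nat - 2 * r 38%nat * r 49%nat
  | 4%nat, 0%nat =>
      2 * r 7%nat * r 41%nat - 2 * r 11%nat * r 37%nat + 2 * r 13%nat * r 35%nat
  | 4%nat, 1%nat =>
      2 * r 7%nat * r 42%nat - 2 * r 11%nat * r 38%nat + 2 * r 14%nat * r 35%nat
  | 4%nat, 2%nat =>
      2 * r 7%nat * r 44%nat - 2 * r 13%nat * r 38%nat + 2 * r 14%nat * r 37%nat
  | 4%nat, 3%nat =>
      2 * r 11%nat * r 44%nat - 2 * r 13%nat * r 42%nat + 2 * r 14%nat * r 41%nat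
  | 4%nat, 4%nat =>
      - r 7%nat * r 56%nat + r 11%nat * r 52%nat - r 13%nat * r 50%nat
      + r 14%nat * r 49%nat + r 19%nat * r 44%nat - r 21%nat * r 42%nat
      + r 22%nat * r 41%nat + r 25%nat * r 38%nat - r 26%nat * r 37%nat
      + r 28%nat * r 35%nat
  | 4%nat, 5%nat =>
      2 * r 35%nat * r 44%nat - 2 * r 37%nat * r 42%nat + 2 * r 38%nat * r 41%nat
  | 5%nat, 0%nat =>
      - 2 * r 7%nat * r 25%nat + 2 * r 11%nat * r 21%nat - 2 * r 13%nat * r 19%nat
  | 5%nat, 1%nat =>
      - 2 * r 7%nat * r 26%nat + 2 * r 11%nat * r 22%nat - 2 * r 14%nat * r 19%nat
  | 5%nat, 2%nat =>
      - 2 * r 7%nat * r 28%nat + 2 * r 13%nat * r 22%nat - 2 * r 14%nat * r 21%nat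
  | 5%nat, 3%nat =>
      - 2 * r 11%nat * r 28%nat + 2 * r 13%nat * r 26%nat - 2 * r 14%nat * r 25%nat
  | 5%nat, 4%nat =>
      - 2 * r 19%nat * r 28%nat + 2 * r 21%nat * r 26%nat - 2 * r 22%nat * r 25%nat
  | 5%nat, 5%nat =>
      - r 7%nat * r 56%nat + r 11%nat * r 52%nat - r 13%nat * r 50%nat
      + r 14%nat * r 49%nat - r 19%nat * r 44%nat + r 21%nat * r 42%nat
      - r 22%nat * r 41%nat - r 25%nat * r 38%nat + r 26%nat * r 37%nat
      - r 28%nat * r 35%nat
  | _, _ => 0 end.

Ltac destr6 i := destruct i as [|[|[|[|[|[|i]]]]]].

Lemma Kmat_Kq (r : Form) (i j : nat) :
  isForm 3 r -> (i < 6)%nat -> (j < 6)%nat -> Kmat r i j = Kq r i j.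
Proof.
  intros H Hi Hj.
  rewrite (Kmat_ext r (restrict (fun S => Nat.eqb (popcount S) 3) r))
    by now apply restrict_feq, isForm_supported.
  destr6 i; try lia; destr6 j; try lia; cbv -[Rplus Rmult Ropp Rinv IZR Rminus Rdiv]; ring.
Qed.

Lemma Kq_ext (r r' : Form) (i j : nat) : feq r r' -> Kq r i j = Kq r' i j.
Proof.
  intros H. destr6 i; destr6 j; cbv beta iota delta [Kq]; repeat rewrite H by lia; reflexivity.
Qed.

Definition lamq (r : Form) : R :=
  / 6 * sumL (fun i => sumL (fun j => Kq r i j * Kq r j i) idx) idx.

Lemma lamq_ext (r r' : Form) : feq r r' -> lamq r = lamq r'.
Proof.
  intros H. unfold lamq. f_equal. apply sumL_ext; intros i _. apply sumL_ext; intros j _.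
  now rewrite !(Kq_ext r r').
Qed.

Lemma lam_lamq (r : Form) : isForm 3 r -> lam r = lamq r.
Proof.
  intros H. unfold lam, lamq. f_equal. apply sumL_ext; intros i Hi%in_idx.
  apply sumL_ext; intros j Hj%in_idx. now rewrite !Kmat_Kq.
Qed.

(* The polarisation of the quadratic map [Kq], and the derivative of
   lambda at r in the direction b. *)
Definition Kpol (r b : Form) (i j : nat) : R := Kq (fadd r b) i j - Kq r i j - Kq b i j.

Definition dlam (r b : Form) : R :=
  / 6 * sumL (fun i => sumL (fun j => Kpol r b i j * Kq r j i + Kq r i j * Kpol r b j i) idx) idx.

Lemma Kq_line (r b : Form) (s : R) (i j : nat) :
  Kq (fadd r (fscale s b)) i j = Kq r i j + Kpol r b i j * s + Kq b i j * s ^ 2.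
Proof. unfold Kpol. destr6 i; destr6 j; cbv beta iota delta [Kq fadd fscale]; ring. Qed.

Lemma Kpol_self (r : Form) (i j : nat) : Kpol r r i j = 2 * Kq r i j.
Proof. unfold Kpol. destr6 i; destr6 j; cbv beta iota delta [Kq fadd]; ring. Qed.

Lemma Kpol_lin (r b c : Form) (k : R) (i j : nat) :
  Kpol r (fadd (fscale k b) c) i j = k * Kpol r b i j + Kpol r c i j.
Proof. unfold Kpol. destr6 i; destr6 j; cbv beta iota delta [Kq fadd fscale]; ring. Qed.

Lemma Kpol_ext_r (r b b' : Form) (i j : nat) : feq b b' -> Kpol r b i j = Kpol r b' i j.
Proof.
  intros H. unfold Kpol. rewrite (Kq_ext b b'), (Kq_ext (fadd r b) (fadd r b')); auto.
  apply fadd_ext; auto using feq_refl.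
Qed.

Lemma dlam_euler (r : Form) : dlam r r = 4 * lamq r.
Proof.
  unfold dlam, lamq.
  assert (E : sumL (fun i => sumL (fun j => Kpol r r i j * Kq r j i + Kq r i j * Kpol r r j i) idx) idx
            = 4 * sumL (fun i => sumL (fun j => Kq r i j * Kq r j i) idx) idx).
  { rewrite <- sumL_scal. apply sumL_ext; intros i _.
    rewrite <- sumL_scal. apply sumL_ext; intros j _. rewrite !Kpol_self. ring. }
  rewrite E. ring.
Qed.

Lemma dlam_lin (r b c : Form) (k : R) : dlam r (fadd (fscale k b) c) = k * dlam r b + dlam r c.
Proof.
  unfold dlam.
  set (T := fun b i j => Kpol r b i j * Kq r j i + Kq r i j * Kpol r b j i).
  assert (E : sumL (fun i => sumL (fun j => T (fadd (fscale k b) c) i j) idx) idx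
     = k * sumL (fun i => sumL (fun j => T b i j) idx) idx
       + sumL (fun i => sumL (fun j => T c i j) idx) idx).
  { rewrite <- sumL_scal, <- sumL_plus. apply sumL_ext; intros i _.
    rewrite <- sumL_scal, <- sumL_plus. apply sumL_ext; intros j _. unfold T. rewrite !Kpol_lin. ring. }
  unfold T in E. rewrite E. ring.
Qed.

Lemma dlam_ext_r (r b b' : Form) : feq b b' -> dlam r b = dlam r b'.
Proof.
  intros H. unfold dlam. f_equal. apply sumL_ext; intros i _. apply sumL_ext; intros j _.
  now rewrite !(Kpol_ext_r r b b').
Qed.

Lemma derivable_sumL (f : nat -> R -> R) (f' : nat -> R) (l : list nat) (x : R) :
  (forall i, In i l -> derivable_pt_lim (f i) x (f' i)) ->
  derivable_pt_lim (fun s => sumL (fun i => f i s) l) x (sumL f' l).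
Proof.
  induction l as [|a l IH]; intros H; simpl.
  - apply (derivable_pt_lim_const 0 x).
  - apply (derivable_pt_lim_plus (f a) (fun s => sumL (fun i => f i s) l)).
    + apply H; now left.
    + apply IH; intros; apply H; now right.
Qed.

Lemma derivable_quadratic (a c e : R) : derivable_pt_lim (fun s => a + c * s + e * s ^ 2) 0 c.
Proof.
  assert (H := derivable_pt_lim_plus _ _ _ _ _
    (derivable_pt_lim_plus _ _ _ _ _ (derivable_pt_lim_const a 0)
       (derivable_pt_lim_scal id c 0 1 (derivable_pt_lim_id 0)))
    (derivable_pt_lim_scal (fun y => y ^ 2) e 0 _ (derivable_pt_lim_pow 0 2))).
  replace (0 + c * 1 + e * (INR 2 * 0 ^ Init.Nat.pred 2)) with c in H by (simpl; ring).
  exact H.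
Qed.

Lemma derivable_quadratic_product (a c e a' c' e' : R) :
  derivable_pt_lim (fun s => (a + c * s + e * s ^ 2) * (a' + c' * s + e' * s ^ 2)) 0
                   (c * a' + a * c').
Proof.
  assert (H := derivable_pt_lim_mult _ _ _ _ _
                 (derivable_quadratic a c e) (derivable_quadratic a' c' e')).
  cbv beta in H.
  replace (c * (a' + c' * 0 + e' * 0 ^ 2) + (a + c * 0 + e * 0 ^ 2) * c') with (c * a' + a * c') in H
    by ring.
  exact H.
Qed.

Lemma derivable_lamq_line (r b : Form) :
  derivable_pt_lim (fun s => lamq (fadd r (fscale s b))) 0 (dlam r b).
Proof.
  unfold lamq, dlam. apply derivable_pt_lim_scal.
  apply (derivable_sumL (fun i s => sumL (fun j => Kq (fadd r (fscale s b)) i j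
                                                 * Kq (fadd r (fscale s b)) j i) idx)).
  intros i _.
  apply (derivable_sumL (fun j s => Kq (fadd r (fscale s b)) i j * Kq (fadd r (fscale s b)) j i)).
  intros j _.
  replace (fun s => Kq (fadd r (fscale s b)) i j * Kq (fadd r (fscale s b)) j i) with
    (fun s => (Kq r i j + Kpol r b i j * s + Kq b i j * s ^ 2)
              * (Kq r j i + Kpol r b j i * s + Kq b j i * s ^ 2))
    by (apply functional_extensionality; intros s; now rewrite !Kq_line).
  apply derivable_quadratic_product.
Qed.

(** The masks [inU3] are the 3-forms
  e^013, e^014, e^034, e^134 (11, 19, 25, 26), which will contain every
  d omega0; the masks [inE25] are the 3-forms divisible by e^25
  (37, 38, 44, 52), on which every closed 3-form vanishes.  Adding a
  combination of the former to a 3-form without the latter leaves lambda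
  unchanged; all derivative statements about lambda that the flow needs
  follow from this one polynomial identity. *)

Definition inU3 (S : nat) : bool :=
  (Nat.eqb S 11 || Nat.eqb S 19 || Nat.eqb S 25 || Nat.eqb S 26)%bool.
Definition inE25 (S : nat) : bool :=
  (Nat.eqb S 37 || Nat.eqb S 38 || Nat.eqb S 44 || Nat.eqb S 52)%bool.
Definition noE25 (S : nat) : bool := negb (inE25 S).

Lemma lamq_restricted (r g : Form) (t : R) :
  lamq (fadd (restrict noE25 r) (fscale t (restrict inU3 g))) = lamq (restrict noE25 r).
Proof.
  unfold lamq. f_equal.
  cbv beta iota delta [restrict noE25 inE25 inU3 negb orb sumL idx seq fold_right
                       Kq fadd fscale Nat.eqb].
  ring.
Qed.

Lemma lamq_invariant (r g : Form) (t : R) :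
  supported noE25 r -> supported inU3 g -> lamq (fadd r (fscale t g)) = lamq r.
Proof.
  intros Hr Hg.
  rewrite (lamq_ext _ (fadd (restrict noE25 r) (fscale t (restrict inU3 g)))), lamq_restricted.
  - symmetry. now apply lamq_ext, restrict_feq.
  - apply fadd_ext, fscale_ext; now apply restrict_feq.
Qed.

Definition eB (B : nat) : Form := fun S => if Nat.eqb S B then 1 else 0.

Lemma derivative_unique_ext (f g : R -> R) (l1 l2 : R) :
  (forall s, f s = g s) -> derivable_pt_lim f 0 l1 -> derivable_pt_lim g 0 l2 -> l1 = l2.
Proof.
  intros E H1 H2. apply functional_extensionality in E. subst.
  exact (uniqueness_limite g 0 l1 l2 H1 H2).
Qed.

Lemma dlam_invariant (r g : Form) (t : R) (B : nat) :
  supported noE25 r -> supported inU3 g -> noE25 B = true ->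
  dlam (fadd r (fscale t g)) (eB B) = dlam r (eB B).
Proof.
  intros Hr Hg HB.
  apply (derivative_unique_ext (fun s => lamq (fadd (fadd r (fscale t g)) (fscale s (eB B))))
                              (fun s => lamq (fadd r (fscale s (eB B)))));
    [|apply derivable_lamq_line..].
  intros s. rewrite <- (lamq_invariant (fadd r (fscale s (eB B))) g t).
  - apply lamq_ext. intros S _. unfold fadd. ring.
  - intros S HS HSe. unfold fadd, fscale, eB. rewrite Hr by auto.
    destruct (Nat.eqb S B) eqn:E; [apply Nat.eqb_eq in E; congruence | ring].
  - exact Hg.
Qed.

Lemma dlam_U3 (r : Form) (B : nat) :
  supported noE25 r -> inU3 B = true -> dlam r (eB B) = 0.
Proof.
  intros Hr HB.
  apply (derivative_unique_ext (fun s => lamq (fadd r (fscale s (eB B)))) (fun _ => lamq r));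
    [|apply derivable_lamq_line|apply derivable_pt_lim_const].
  intros s. apply lamq_invariant; auto.
  intros S HS HSu. unfold eB. destruct (Nat.eqb S B) eqn:E; [apply Nat.eqb_eq in E; congruence|auto].
Qed.

Definition sgn (x : R) : R := if Rlt_dec 0 x then 1 else -1.

(* The factor relating d phi to d lambda: phi = orient * sqrt |lambda|. *)
Definition hatC (w r : Form) : R := orient w * sgn (lamq r) / (2 * sqrt (Rabs (lamq r))).

Lemma hatC_neq0 (w r : Form) : lamq r <> 0 -> hatC w r <> 0.
Proof.
  intros Hl. assert (Hs : 0 < sqrt (Rabs (lamq r))) by now apply sqrt_lt_R0, Rabs_pos_lt.
  unfold hatC, orient, sgn.
  destruct (Rlt_dec 0 (cube w 63%nat)), (Rlt_dec 0 (lamq r));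
    apply Rmult_integral_contrapositive; split; try lra; apply Rinv_neq_0_compat; lra.
Qed.

Lemma derivable_phi_line (w r b : Form) :
  isForm 3 r -> isForm 3 b -> lamq r <> 0 ->
  derivable_pt_lim (fun s => phi w (fadd r (fscale s b))) 0 (hatC w r * dlam r b).
Proof.
  intros Hr Hb Hl.
  set (lamline := fun s => lamq (fadd r (fscale s b))).
  assert (E : (fun s => phi w (fadd r (fscale s b)))
              = mult_real_fct (orient w) (comp sqrt (comp Rabs lamline))).
  { apply functional_extensionality; intros s. unfold phi, mult_real_fct, comp, lamline.
    now rewrite lam_lamq by now apply isForm_line. }
  assert (H0 : lamline 0 = lamq r).
  { apply lamq_ext. intros S _. unfold fadd, fscale. ring. }
  assert (Hpos : 0 < Rabs (lamq r)) by now apply Rabs_pos_lt.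
  assert (Habs : derivable_pt_lim (comp Rabs lamline) 0 (sgn (lamq r) * dlam r b)).
  { apply derivable_pt_lim_comp; [apply derivable_lamq_line|]. rewrite H0. unfold sgn.
    destruct (Rlt_dec 0 (lamq r)).
    - now apply Rabs_derive_1.
    - apply Rabs_derive_2. lra. }
  assert (Hsqrt : derivable_pt_lim sqrt (comp Rabs lamline 0) (/ (2 * sqrt (Rabs (lamq r))))).
  { unfold comp. rewrite H0. now apply derivable_pt_lim_sqrt. }
  rewrite E.
  replace (hatC w r * dlam r b) with
    (orient w * (/ (2 * sqrt (Rabs (lamq r))) * (sgn (lamq r) * dlam r b))).
  - apply derivable_pt_lim_scal. exact (derivable_pt_lim_comp _ _ _ _ _ Habs Hsqrt).
  - unfold hatC. field. apply Rgt_not_eq, sqrt_lt_R0; auto.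
Qed.

(* e^S /\ e^(63-S) = compl_sign S * nu *)
Definition compl_sign (S : nat) : R := (-1) ^ (inversions S (63 - S)).

Lemma compl_sign_sq (S : nat) : compl_sign S * compl_sign S = 1.
Proof.
  unfold compl_sign. rewrite <- pow_add. replace (_ + _)%nat with (2 * inversions S (63 - S))%nat by lia.
  rewrite pow_mult. replace ((-1) ^ 2) with 1 by ring. apply pow1.
Qed.

Lemma land_63 (A : nat) : (A < 64)%nat -> Nat.land A 63 = A.
Proof.
  revert A.
  assert (H : forallb (fun A => Nat.eqb (Nat.land A 63) A) (seq 0 64) = true)
    by (vm_compute; reflexivity).
  intros A HA. apply Nat.eqb_eq. exact (forallb_seq _ _ H A HA).
Qed.

Lemma wedge_eB (a : Form) (B : nat) :
  (B < 64)%nat -> wedge a (eB B) 63%nat = compl_sign (63 - B) * a (63 - B)%nat.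
Proof.
  intros HB. unfold wedge. rewrite (sumL_single _ (63 - B)).
  - rewrite land_63, Nat.eqb_refl by lia. unfold eB, compl_sign.
    replace (63 - (63 - B))%nat with B by lia. rewrite Nat.eqb_refl. ring.
  - lia.
  - intros x Hx Hne. destruct (Nat.eqb (Nat.land x 63) x); [|reflexivity]. unfold eB.
    replace (Nat.eqb (63 - x) B) with false by (symmetry; apply Nat.eqb_neq; lia). ring.
Qed.

Lemma popcount_complement (S : nat) : (S < 64)%nat -> popcount (63 - S) = (6 - popcount S)%nat.
Proof.
  revert S.
  assert (H : forallb (fun S => Nat.eqb (popcount (63 - S)) (6 - popcount S)) (seq 0 64) = true)
    by (vm_compute; reflexivity).
  intros S HS. apply Nat.eqb_eq. exact (forallb_seq _ _ H S HS).
Qed.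

Lemma isForm3_eB (B : nat) : popcount B = 3%nat -> isForm 3 (eB B).
Proof.
  intros HB S HS Hp. unfold eB. destruct (Nat.eqb S B) eqn:E; [|reflexivity].
  apply Nat.eqb_eq in E; subst; contradiction.
Qed.

Lemma three_form_by_pairing (a a' : Form) :
  isForm 3 a -> isForm 3 a' ->
  (forall b, isForm 3 b -> wedge a b 63%nat = wedge a' b 63%nat) -> feq a a'.
Proof.
  intros Ha Ha' H S HS. destruct (Nat.eq_dec (popcount S) 3) as [Hp|Hp].
  - assert (Hb : isForm 3 (eB (63 - S))).
    { apply isForm3_eB. rewrite popcount_complement; lia. }
    pose proof (H _ Hb) as E. rewrite !wedge_eB in E by lia.
    replace (63 - (63 - S))%nat with S in E by lia.
    apply (Rmult_eq_reg_l (compl_sign S)); auto.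
    intros Hz. pose proof (compl_sign_sq S) as Hs. rewrite Hz in Hs. lra.
  - rewrite Ha, Ha'; auto.
Qed.

Definition linear_functional (L : Form -> R) : Prop :=
  (forall k b c, L (fadd (fscale k b) c) = k * L b + L c) /\
  (forall b b', feq b b' -> L b = L b').

Definition fexpand (b : Form) (l : list nat) : Form :=
  fold_right (fun B acc => fadd (fscale (b B) (eB B)) acc) fzero l.

Lemma fexpand_coeff (b : Form) (l : list nat) (S : nat) :
  fexpand b l S = sumL (fun B => b B * eB B S) l.
Proof. induction l as [|B l IH]; simpl; [reflexivity|]. unfold fadd, fscale. now rewrite IH. Qed.

Lemma fexpand_feq (b : Form) : feq b (fexpand b masks).
Proof.
  intros S HS. rewrite fexpand_coeff, (sumL_single _ S HS).
  - unfold eB. rewrite Nat.eqb_refl. ring.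
  - intros x _ Hne. unfold eB. replace (Nat.eqb S x) with false by (symmetry; apply Nat.eqb_neq; auto).
    ring.
Qed.

Lemma linear_expand (L : Form -> R) (b : Form) :
  linear_functional L -> L b = sumL (fun B => b B * L (eB B)) masks.
Proof.
  intros [Hlin Hext]. rewrite (Hext _ _ (fexpand_feq b)).
  assert (H0 : L fzero = 0).
  { assert (E := Hlin 1 fzero fzero).
    rewrite (Hext (fadd (fscale 1 fzero) fzero) fzero) in E
      by (intros S _; unfold fadd, fscale, fzero; ring).
    lra. }
  induction masks as [|B l IH]; simpl; [exact H0|]. rewrite Hlin, IH. reflexivity.
Qed.

Definition grad3 (L : Form -> R) : Form := fun S =>
  if Nat.eqb (popcount S) 3 then compl_sign S * L (eB (63 - S)) else 0.

Lemma grad3_form (L : Form -> R) : isForm 3 (grad3 L).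
Proof. intros S HS Hp. unfold grad3. apply Nat.eqb_neq in Hp. now rewrite Hp. Qed.

Lemma grad3_wedge (L : Form -> R) (b : Form) :
  linear_functional L -> isForm 3 b -> wedge (grad3 L) b 63%nat = L b.
Proof.
  intros HL Hb.
  assert (HW : linear_functional (fun c => wedge (grad3 L) c 63%nat)).
  { split.
    - intros k c c'. now rewrite wedge_addr, wedge_scalr.
    - intros c c' Hc. apply wedge_ext; auto using feq_refl; lia. }
  rewrite (linear_expand _ b HW), (linear_expand L b HL). apply sumL_ext. intros B HB%in_masks.
  destruct (Nat.eq_dec (popcount B) 3) as [Hp|Hp]; [|rewrite Hb by auto; ring].
  rewrite wedge_eB by auto. unfold grad3.
  replace (Nat.eqb (popcount (63 - B)) 3) with true
    by (symmetry; apply Nat.eqb_eq; rewrite popcount_complement; lia).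
  replace (63 - (63 - B))%nat with B by lia.
  rewrite <- (Rmult_assoc (compl_sign (63 - B))), compl_sign_sq. ring.
Qed.

Definition hatF (C : R) (r : Form) : Form := grad3 (fun b => C * dlam r b).

Lemma linear_dlam (C : R) (r : Form) : linear_functional (fun b => C * dlam r b).
Proof.
  split.
  - intros k b c. rewrite dlam_lin. ring.
  - intros b b' H. now rewrite (dlam_ext_r r b b' H).
Qed.

Lemma hatF_is_hat (w r : Form) :
  isForm 3 r -> lamq r <> 0 -> IsHat w r (hatF (hatC w r) r).
Proof.
  intros Hr Hl. split; [apply grad3_form|]. intros b Hb.
  unfold hatF. rewrite grad3_wedge by auto using linear_dlam. now apply derivable_phi_line.
Qed.

Lemma hat_pairing (w r rh b : Form) :
  isForm 3 r -> lamq r <> 0 -> IsHat w r rh -> isForm 3 b ->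
  wedge rh b 63%nat = hatC w r * dlam r b.
Proof.
  intros Hr Hl [_ Hd] Hb.
  exact (uniqueness_limite _ 0 _ _ (Hd b Hb) (derivable_phi_line w r b Hr Hb Hl)).
Qed.

Lemma hat_unique (w r rh : Form) :
  isForm 3 r -> lamq r <> 0 -> IsHat w r rh -> feq rh (hatF (hatC w r) r).
Proof.
  intros Hr Hl Hh. apply three_form_by_pairing; [apply Hh|apply grad3_form|].
  intros b Hb. unfold hatF. rewrite grad3_wedge by auto using linear_dlam. now apply (hat_pairing w).
Qed.

(* For a normalised pair, the pairing of rho with its hat is 4 hatC lambda,
   which is nonzero; hence omega^3 is a nonzero multiple of nu. *)
Lemma normalised_cube_neq0 (w r rh : Form) :
  isForm 3 r -> lamq r <> 0 -> IsHat w r rh ->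
  feq (wedge rh r) (fscale (2/3) (cube w)) -> cube w 63%nat <> 0.
Proof.
  intros Hr Hl Hh Hn Hc. pose proof (Hn 63%nat ltac:(lia)) as E. unfold fscale in E.
  rewrite (hat_pairing w r rh r), dlam_euler, Hc in E by auto.
  apply (hatC_neq0 w r Hl). nra.
Qed.

Lemma complement_E25 (S : nat) : (S < 64)%nat -> inE25 (63 - S) = inU3 S.
Proof.
  revert S.
  assert (H : forallb (fun S => Bool.eqb (inE25 (63 - S)) (inU3 S)) (seq 0 64) = true)
    by (vm_compute; reflexivity).
  intros S HS. apply Bool.eqb_prop. exact (forallb_seq _ _ H S HS).
Qed.

Lemma hatF_deformation (C : R) (r g : Form) (t : R) :
  supported noE25 r -> supported inU3 g ->
  supported inU3 (fadd (hatF C (fadd r (fscale t g))) (fscale (-1) (hatF C r))).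
Proof.
  intros Hr Hg S HS HU.
  change (hatF C (fadd r (fscale t g)) S + -1 * hatF C r S = 0). unfold hatF, grad3.
  destruct (Nat.eqb (popcount S) 3); [|ring].
  rewrite dlam_invariant; auto; [ring|]. unfold noE25. now rewrite complement_E25, HU.
Qed.

Lemma hatF_noE25 (C : R) (r : Form) : supported noE25 r -> supported noE25 (hatF C r).
Proof.
  intros Hr S HS HE. unfold hatF, grad3.
  destruct (Nat.eqb (popcount S) 3); [|reflexivity].
  rewrite dlam_U3; auto; [ring|]. rewrite <- complement_E25 by lia.
  replace (63 - (63 - S))%nat with S by lia. unfold noE25 in HE. now destruct (inE25 S).
Qed.

(** The coefficients of d e^S are integers, so
  the definition of [dF] is mirrored in [Z], where it can be evaluated; the
  evaluation is made fast by using that each d e^i is a single monomial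
  (d e^2 = -e^01, d e^5 = -e^34, all others vanish). *)

Definition signZ (n : nat) : Z := if Nat.even n then 1%Z else (-1)%Z.

Lemma pow_m1 (n : nat) : (-1) ^ n = IZR (signZ n).
Proof.
  induction n as [|n IH]; [reflexivity|].
  rewrite <- tech_pow_Rmult, IH. unfold signZ. rewrite Nat.even_succ, <- Nat.negb_even.
  destruct (Nat.even n); simpl; lra.
Qed.

Definition sumLZ (f : nat -> Z) (l : list nat) : Z :=
  fold_right (fun x acc => (f x + acc)%Z) 0%Z l.

Lemma sumL_IZR (f : nat -> R) (g : nat -> Z) (l : list nat) :
  (forall x, f x = IZR (g x)) -> sumL f l = IZR (sumLZ g l).
Proof. intros H; induction l; simpl; [reflexivity|]. now rewrite H, IHl, plus_IZR. Qed.

Definition wedgeZ (a b : nat -> Z) (S : nat) : Z :=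
  sumLZ (fun A => if Nat.eqb (Nat.land A S) A
                  then (signZ (inversions A (S - A)) * a A * b (S - A)%nat)%Z else 0%Z) masks.

Lemma wedge_IZR (a b : Form) (a' b' : nat -> Z) :
  (forall S, a S = IZR (a' S)) -> (forall S, b S = IZR (b' S)) ->
  forall T, wedge a b T = IZR (wedgeZ a' b' T).
Proof.
  intros Ha Hb T. apply sumL_IZR. intros A.
  destruct (Nat.eqb (Nat.land A T) A); [|reflexivity].
  now rewrite pow_m1, Ha, Hb, !mult_IZR.
Qed.

Definition monoZ (l : list nat) (S : nat) : Z :=
  if Nat.eqb S (fold_right (fun i acc => (2 ^ i + acc)%nat) 0%nat l) then 1%Z else 0%Z.

Definition cstZ (i j k : nat) : Z :=
  match i, j, k with
  | 0%nat, 1%nat, 2%nat => 1 | 1%nat, 0%nat, 2%nat => -1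
  | 3%nat, 4%nat, 5%nat => 1 | 4%nat, 3%nat, 5%nat => -1
  | _, _, _ => 0 end.

Definition d1Z (k S : nat) : Z :=
  match bits S with
  | [i; j] => (- cstZ i j k)%Z
  | _ => 0%Z end.

Fixpoint dmonoZ (l : list nat) : nat -> Z :=
  match l with
  | [] => fun _ => 0%Z
  | i :: l' => fun S =>
      (wedgeZ (d1Z i) (monoZ l') S + (-1) * wedgeZ (monoZ [i]) (dmonoZ l') S)%Z
  end.

(* [Defs.d1] is qualified: [Reals] also exports a [d1]. *)
Lemma dmono_IZR (l : list nat) (S : nat) : dmono l S = IZR (dmonoZ l S).
Proof.
  assert (Hmono : forall l S, mono l S = IZR (monoZ l S))
    by (intros; unfold mono, monoZ; now destruct (Nat.eqb _ _)).
  assert (Hd1 : forall k S, Defs.d1 k S = IZR (d1Z k S)).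
  { intros k S0. unfold Defs.d1, d1Z. destruct (bits S0) as [|i [|j [|x l0]]]; try reflexivity.
    rewrite opp_IZR. f_equal.
    destruct i as [|[|[|[|[|i]]]]]; destruct j as [|[|[|[|[|j]]]]];
      destruct k as [|[|[|[|[|[|k]]]]]]; reflexivity. }
  revert S; induction l as [|i l IH]; intros S; cbn [dmono dmonoZ]; [reflexivity|].
  unfold fadd, fscale.
  rewrite (wedge_IZR _ _ (d1Z i) (monoZ l)), (wedge_IZR _ _ (monoZ [i]) (dmonoZ l)) by auto.
  rewrite plus_IZR, mult_IZR. reflexivity.
Qed.

Definition wedge_term (a b : nat -> Z) (A S : nat) : Z :=
  if Nat.eqb (Nat.land A S) A then (signZ (inversions A (S - A)) * a A * b (S - A)%nat)%Z else 0%Z.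

Lemma wedgeZ_single (a b : nat -> Z) (A S : nat) :
  (A < 64)%nat -> (forall x, (x < 64)%nat -> x <> A -> a x = 0%Z) ->
  wedgeZ a b S = wedge_term a b A S.
Proof.
  intros HA Ha.
  set (f := fun x => if Nat.eqb (Nat.land x S) x
                     then (signZ (inversions x (S - x)) * a x * b (S - x)%nat)%Z else 0%Z).
  change (sumLZ f masks = f A).
  apply (fold_single Z Z.add 0%Z); [intros; lia | intros; lia | apply seq_NoDup | now apply in_masks |].
  intros x Hx%in_masks Hne. unfold f. destruct (Nat.eqb (Nat.land x S) x); [|reflexivity].
  rewrite Ha by auto. lia.
Qed.

Definition d1pos (i : nat) : nat := match i with 2%nat => 3%nat | 5%nat => 24%nat | _ => 0%nat end.

Lemma d1Z_single (i x : nat) : (i < 6)%nat -> (x < 64)%nat -> x <> d1pos i -> d1Z i x = 0%Z.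
Proof.
  revert i x.
  assert (H : forallb (fun i => forallb (fun x =>
     orb (Nat.eqb x (d1pos i)) (Z.eqb (d1Z i x) 0)) (seq 0 64)) (seq 0 6) = true)
    by (vm_compute; reflexivity).
  intros i x Hi Hx Hne. pose proof (forallb_seq _ _ (forallb_seq _ _ H i Hi) x Hx) as G.
  cbv beta in G. apply Nat.eqb_neq in Hne. rewrite Hne in G. now apply Z.eqb_eq.
Qed.

Fixpoint dmonoF (l : list nat) (S : nat) : Z :=
  match l with
  | [] => 0%Z
  | i :: l' => (wedge_term (d1Z i) (monoZ l') (d1pos i) S
                + (-1) * wedge_term (monoZ [i]) (dmonoF l') (2 ^ i + 0) S)%Z
  end.

Lemma dmonoF_eq (l : list nat) (S : nat) :
  Forall (fun x => (x < 6)%nat) l -> (S < 64)%nat -> dmonoZ l S = dmonoF l S.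
Proof.
  revert S. induction l as [|i l IH]; intros S Hl HS; [reflexivity|].
  inversion Hl as [|? ? Hi Hl']; subst. simpl.
  assert (Hpow : (2 ^ i + 0 < 64)%nat).
  { do 6 (destruct i as [|i]; [simpl; lia|]). lia. }
  rewrite (wedgeZ_single (d1Z i) _ (d1pos i)), (wedgeZ_single (monoZ [i]) _ (2 ^ i + 0)).
  - unfold wedge_term. destruct (Nat.eqb (Nat.land (2 ^ i + 0) S) (2 ^ i + 0)); [|reflexivity].
    rewrite IH by (auto; lia). reflexivity.
  - exact Hpow.
  - intros x _ Hne. unfold monoZ. simpl. now rewrite (proj2 (Nat.eqb_neq x _) Hne).
  - destruct i as [|[|[|[|[|[|i]]]]]]; simpl; lia.
  - intros x Hx Hne. now apply d1Z_single.
Qed.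

Lemma dF_coeff (a : Form) (T : nat) :
  (T < 64)%nat -> dF a T = sumL (fun S => a S * IZR (dmonoF (bits S) T)) masks.
Proof.
  intros HT. unfold dF. apply sumL_ext. intros S _. rewrite dmono_IZR, dmonoF_eq; auto.
  apply Forall_forall. intros x Hx. unfold bits in Hx. apply filter_In in Hx.
  now apply in_idx.
Qed.

Definition d_check (p q : nat -> bool) : bool :=
  forallb (fun T => orb (q T)
    (forallb (fun S => orb (negb (p S)) (Z.eqb (dmonoF (bits S) T) 0)) masks)) masks.

Lemma dF_supported (p q : nat -> bool) (a : Form) :
  supported p a -> d_check p q = true -> supported q (dF a).
Proof.
  intros Ha Hc T HT Hq. rewrite dF_coeff by auto.
  pose proof (forallb_seq _ _ Hc T HT) as G. cbv beta in G. rewrite Hq, Bool.orb_false_l in G.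
  apply (fold_zero R Rplus 0); [intros; ring|]. intros S HS.
  pose proof (proj1 (forallb_forall _ _) G S HS) as GS. apply in_masks in HS. cbv beta in GS.
  destruct (p S) eqn:E.
  - cbn [negb orb] in GS. apply Z.eqb_eq in GS. rewrite GS. ring.
  - rewrite Ha by auto. ring.
Qed.

Definition d_single_check (p : nat -> bool) (S0 T : nat) : bool :=
  forallb (fun S => orb (Nat.eqb S S0) (orb (negb (p S)) (Z.eqb (dmonoF (bits S) T) 0))) masks.

Lemma dF_single (p : nat -> bool) (a : Form) (S0 T : nat) :
  supported p a -> (T < 64)%nat -> (S0 < 64)%nat -> d_single_check p S0 T = true ->
  dF a T = a S0 * IZR (dmonoF (bits S0) T).
Proof.
  intros Ha HT HS0 Hc. rewrite dF_coeff by auto.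
  apply (sumL_single (fun S => a S * IZR (dmonoF (bits S) T))); auto.
  intros x Hx Hne. pose proof (forallb_seq _ _ Hc x Hx) as G. cbv beta in G.
  apply Nat.eqb_neq in Hne. rewrite Hne, Bool.orb_false_l in G.
  destruct (p x) eqn:E.
  - cbn [negb orb] in G. apply Z.eqb_eq in G. rewrite G. ring.
  - rewrite Ha by auto. ring.
Qed.

Lemma ebasis_central (j : nat) : (j = 2 \/ j = 5)%nat -> inCentre (ebasis j).
Proof.
  intros Hj y k Hk. unfold bracket.
  destruct Hj as [-> | ->]; cbv beta iota delta [sumL idx seq fold_right ebasis Nat.eqb cst]; ring.
Qed.

(* omega(e2, e5) is the coefficient of e^25. *)
Lemma centre_coefficient (w : Form) :
  (forall z1 z2 : Vec, inCentre z1 -> inCentre z2 -> eval2 w z1 z2 = 0) -> w 36%nat = 0.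
Proof.
  intros H.
  pose proof (H (ebasis 2) (ebasis 5) (ebasis_central 2 (or_introl eq_refl))
                (ebasis_central 5 (or_intror eq_refl))) as E.
  unfold eval2 in E. cbv -[Rplus Rmult Ropp Rinv IZR Rminus Rdiv] in E. lra.
Qed.

Definition two_no25 (S : nat) : bool := andb (Nat.eqb (popcount S) 2) (negb (Nat.eqb S 36)).

Lemma two_form_no25 (w : Form) : isForm 2 w -> w 36%nat = 0 -> supported two_no25 w.
Proof.
  intros H2 H36. apply supported_and; [now apply isForm_supported|].
  intros S _ HS. destruct (Nat.eqb S 36) eqn:E; [|discriminate].
  now apply Nat.eqb_eq in E as ->.
Qed.

Lemma d_omega_U3 (w : Form) : supported two_no25 w -> supported inU3 (dF w).
Proof. intros H. apply (dF_supported two_no25); [exact H | vm_compute; reflexivity]. Qed.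

Lemma U3_three (a : Form) : supported inU3 a -> isForm 3 a.
Proof.
  intros H S HS Hp. apply H; auto. revert S HS Hp.
  assert (C : forallb (fun S => orb (negb (inU3 S)) (Nat.eqb (popcount S) 3)) (seq 0 64) = true)
    by (vm_compute; reflexivity).
  intros S HS Hp. pose proof (forallb_seq _ _ C S HS) as G. cbv beta in G.
  destruct (inU3 S); [|reflexivity]. apply Nat.eqb_eq in G. contradiction.
Qed.

Lemma U3_closed (a : Form) : supported inU3 a -> feq (dF a) fzero.
Proof.
  intros H. apply supported_none. apply (dF_supported inU3); [exact H | vm_compute; reflexivity].
Qed.

(* d of a 3-form without e^25 components is a multiple of e^0134. *)
Lemma d_noE25 (r : Form) :
  isForm 3 r -> supported noE25 r -> supported (fun T => Nat.eqb T 27) (dF r).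
Proof.
  intros H3 H25.
  apply (dF_supported (fun S => andb (Nat.eqb (popcount S) 3) (noE25 S))).
  - apply supported_and; auto. now apply isForm_supported.
  - vm_compute; reflexivity.
Qed.

(* Closed 3-forms have no e^25 components: the coefficient of e^S, S in E25,
   is read off from a single coefficient of d r. *)
Lemma closed_noE25 (r : Form) : isForm 3 r -> feq (dF r) fzero -> supported noE25 r.
Proof.
  intros H3 Hd.
  assert (Hread : forall S T, (S < 64)%nat -> (T < 64)%nat ->
             d_single_check (fun S => Nat.eqb (popcount S) 3) S T = true ->
             dmonoF (bits S) T = (-1)%Z -> r S = 0).
  { intros S T HS HT Hc Hm.
    pose proof (dF_single _ r S T (isForm_supported 3 r H3) HT HS Hc) as E.
    rewrite Hd, Hm in E by auto. unfold fzero in E. lra. }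
  intros S HS HE. unfold noE25, inE25 in HE.
  destruct (Nat.eqb S 37) eqn:E1; [apply Nat.eqb_eq in E1 as ->; apply (Hread 37%nat 29%nat)|];
  [lia | lia | vm_compute; reflexivity | vm_compute; reflexivity |].
  destruct (Nat.eqb S 38) eqn:E2; [apply Nat.eqb_eq in E2 as ->; apply (Hread 38%nat 30%nat)|];
  [lia | lia | vm_compute; reflexivity | vm_compute; reflexivity |].
  destruct (Nat.eqb S 44) eqn:E3; [apply Nat.eqb_eq in E3 as ->; apply (Hread 44%nat 43%nat)|];
  [lia | lia | vm_compute; reflexivity | vm_compute; reflexivity |].
  destruct (Nat.eqb S 52) eqn:E4; [apply Nat.eqb_eq in E4 as ->; apply (Hread 52%nat 51%nat)|];
  [lia | lia | vm_compute; reflexivity | vm_compute; reflexivity | discriminate].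
Qed.

(** The correction 2-form eta = alpha /\ beta, where alpha and beta are the
  restrictions of -(e2 _| omega) and -(e5 _| omega) to <e0, e1, e3, e4>.
  [ins2 w u] and [ins5 w u] are their coefficients on e^u, and
  [ins2_at w v], [ins5_at w v] their values on a vector. *)

Definition ins2 (w : Form) (u : nat) : R :=
  match u with
  | 0%nat => w 5%nat | 1%nat => w 6%nat | 3%nat => - w 12%nat | 4%nat => - w 20%nat | _ => 0
  end.
Definition ins5 (w : Form) (u : nat) : R :=
  match u with
  | 0%nat => w 33%nat | 1%nat => w 34%nat | 3%nat => w 40%nat | 4%nat => w 48%nat | _ => 0
  end.

Definition ins2_at (w : Form) (v : Vec) : R :=
  ins2 w 0 * v 0%nat + ins2 w 1 * v 1%nat + ins2 w 3 * v 3%nat + ins2 w 4 * v 4%nat.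
Definition ins5_at (w : Form) (v : Vec) : R :=
  ins5 w 0 * v 0%nat + ins5 w 1 * v 1%nat + ins5 w 3 * v 3%nat + ins5 w 4 * v 4%nat.

Definition eta (w : Form) : Form := fun S =>
  if Nat.eqb S 3 then ins2 w 0 * ins5 w 1 - ins2 w 1 * ins5 w 0
  else if Nat.eqb S 9 then ins2 w 0 * ins5 w 3 - ins2 w 3 * ins5 w 0
  else if Nat.eqb S 17 then ins2 w 0 * ins5 w 4 - ins2 w 4 * ins5 w 0
  else if Nat.eqb S 10 then ins2 w 1 * ins5 w 3 - ins2 w 3 * ins5 w 1
  else if Nat.eqb S 18 then ins2 w 1 * ins5 w 4 - ins2 w 4 * ins5 w 1
  else if Nat.eqb S 24 then ins2 w 3 * ins5 w 4 - ins2 w 4 * ins5 w 3 else 0.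

Definition inU2 (S : nat) : bool :=
  (Nat.eqb S 3 || Nat.eqb S 9 || Nat.eqb S 17 || Nat.eqb S 10 || Nat.eqb S 18 || Nat.eqb S 24)%bool.

Lemma eta_supported (w : Form) : supported inU2 (eta w).
Proof.
  intros S _ H. unfold inU2 in H. unfold eta.
  repeat match type of H with
         | (_ || _)%bool = false => apply Bool.orb_false_elim in H as [H ?]
         end.
  repeat match goal with Hs : Nat.eqb _ _ = false |- _ => rewrite Hs; clear Hs end.
  reflexivity.
Qed.

Lemma eta_form (w : Form) : isForm 2 (eta w).
Proof.
  intros S HS Hp. apply eta_supported; auto. revert S HS Hp.
  assert (C : forallb (fun S => orb (negb (inU2 S)) (Nat.eqb (popcount S) 2)) (seq 0 64) = true)
    by (vm_compute; reflexivity).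
  intros S HS Hp. pose proof (forallb_seq _ _ C S HS) as G. cbv beta in G.
  destruct (inU2 S); [|reflexivity]. apply Nat.eqb_eq in G. contradiction.
Qed.

Lemma eta_closed (w : Form) : feq (dF (eta w)) fzero.
Proof.
  apply supported_none, (dF_supported inU2); [apply eta_supported | vm_compute; reflexivity].
Qed.

Ltac coordinates := cbv -[Rplus Rmult Ropp Rinv IZR Rminus Rdiv]; ring.

Lemma cube_by_eta (w : Form) :
  cube (restrict two_no25 w) 63%nat = -6 * wedge (restrict two_no25 w) (eta w) 27%nat.
Proof. coordinates. Qed.

Lemma cube_deform (w : Form) (k : R) :
  cube (fadd (restrict two_no25 w) (fscale k (eta w))) 63%nat = cube (restrict two_no25 w) 63%nat.
Proof. coordinates. Qed.

Lemma square_deform (w : Form) (k : R) (S : nat) : (S < 64)%nat ->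
  wedge (fadd (restrict two_no25 w) (fscale k (eta w)))
        (fadd (restrict two_no25 w) (fscale k (eta w))) S
  = wedge (restrict two_no25 w) (restrict two_no25 w) S
    + (if Nat.eqb S 27 then 2 * k * wedge (restrict two_no25 w) (eta w) 27%nat else 0).
Proof. intros HS. do 64 (destruct S as [|S]; [coordinates|]). lia. Qed.

Lemma eval2_deform (w : Form) (k : R) (v u : Vec) :
  eval2 (fadd (restrict two_no25 w) (fscale k (eta w))) v u
  = eval2 (restrict two_no25 w) v u + k * (ins2_at w v * ins5_at w u - ins5_at w v * ins2_at w u).
Proof. coordinates. Qed.

Lemma eval2_e2 (w : Form) (v : Vec) : eval2 (restrict two_no25 w) v (ebasis 2) = ins2_at w v.
Proof. coordinates. Qed.

Lemma eval2_e5 (w : Form) (v : Vec) : eval2 (restrict two_no25 w) v (ebasis 5) = ins5_at w v.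
Proof. coordinates. Qed.

Lemma ins_at_centre (w : Form) (j : nat) :
  (j = 2 \/ j = 5)%nat -> ins2_at w (ebasis j) = 0 /\ ins5_at w (ebasis j) = 0.
Proof. intros [-> | ->]; unfold ins2_at, ins5_at, ebasis; simpl; split; ring. Qed.

Lemma derivable_affine (a b t : R) : derivable_pt_lim (fun s => a + s * b) t b.
Proof.
  assert (H := derivable_pt_lim_plus _ _ _ _ _ (derivable_pt_lim_const a t)
     (derivable_pt_lim_mult _ _ _ _ _ (derivable_pt_lim_id t) (derivable_pt_lim_const b t))).
  replace (0 + (1 * fct_cte b t + id t * 0)) with b in H by (unfold fct_cte, id; ring).
  exact H.
Qed.

Section Flow.
Variables w0 rho0 rh0 : Form.
Hypothesis Hw2 : isForm 2 w0.
Hypothesis Hw36 : w0 36%nat = 0.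
Hypothesis Hnd : nondeg w0.
Hypothesis Hr3 : isForm 3 rho0.
Hypothesis Hr25 : supported noE25 rho0.
Hypothesis Hlam : lamq rho0 <> 0.
Hypothesis Hcube : cube w0 63%nat <> 0.
Hypothesis Hhat : IsHat w0 rho0 rh0.

Local Notation cw := (restrict two_no25 w0).
Local Notation Chat := (hatC w0 rho0).

Lemma w0_normal : feq w0 cw.
Proof. apply restrict_feq, two_form_no25; auto. Qed.

(* omega0 /\ eta = m e^0134 with m <> 0, since omega0^3 = -6 m nu. *)
Definition eta_volume : R := wedge cw (eta w0) 27%nat.

Lemma eta_volume_neq0 : eta_volume <> 0.
Proof.
  intros Hm. apply Hcube. rewrite (cube_ext w0 cw w0_normal) by lia.
  rewrite cube_by_eta. unfold eta_volume in Hm. rewrite Hm. ring.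
Qed.

(* d rhohat0 = k e^0134, and the flow moves omega along eta at rate k / m. *)
Definition rate : R := dF rh0 27%nat / eta_volume.

Definition omega_t (t : R) : Form := fadd w0 (fscale (t * rate) (eta w0)).
Definition rho_t (t : R) : Form := fadd rho0 (fscale t (dF w0)).

Lemma dw0_U3 : supported inU3 (dF w0).
Proof. apply d_omega_U3, two_form_no25; auto. Qed.

Lemma omega_t_form (t : R) : isForm 2 (omega_t t).
Proof. apply isForm_line; auto using eta_form. Qed.

Lemma rho_t_form (t : R) : isForm 3 (rho_t t).
Proof. apply isForm_line; auto using U3_three, dw0_U3. Qed.

Lemma omega_t_normal (t : R) : feq (omega_t t) (fadd cw (fscale (t * rate) (eta w0))).
Proof. apply fadd_ext; auto using w0_normal, feq_refl. Qed.

Lemma lamq_rho_t (t : R) : lamq (rho_t t) = lamq rho0.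
Proof. apply lamq_invariant; auto using dw0_U3. Qed.

Lemma rho_t_stable (t : R) : stable (rho_t t).
Proof. unfold stable. rewrite lam_lamq, lamq_rho_t; auto using rho_t_form. Qed.

Lemma orient_omega_t (t : R) : orient (omega_t t) = orient w0.
Proof.
  unfold orient. rewrite (cube_ext _ _ (omega_t_normal t)), (cube_ext w0 cw w0_normal) by lia.
  now rewrite cube_deform.
Qed.

(* The kernel of omega_t pairs trivially with e2 and e5, hence with eta,
   hence lies in the kernel of omega0. *)
Lemma omega_t_nondeg (t : R) : nondeg (omega_t t).
Proof.
  intros v Hv. apply Hnd. intros u.
  assert (Ht : forall u, eval2 (omega_t t) v u
     = eval2 cw v u + (t * rate) * (ins2_at w0 v * ins5_at w0 u - ins5_at w0 v * ins2_at w0 u)).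
  { intros u0. rewrite (eval2_ext _ _ v u0 (omega_t_normal t)). apply eval2_deform. }
  assert (H2 : ins2_at w0 v = 0).
  { destruct (ins_at_centre w0 2 (or_introl eq_refl)) as [A2 B2].
    pose proof (Hv (ebasis 2)) as E. rewrite Ht, eval2_e2, A2, B2 in E. lra. }
  assert (H5 : ins5_at w0 v = 0).
  { destruct (ins_at_centre w0 5 (or_intror eq_refl)) as [A5 B5].
    pose proof (Hv (ebasis 5)) as E. rewrite Ht, eval2_e5, A5, B5 in E. lra. }
  pose proof (Hv u) as E. rewrite Ht, H2, H5 in E. rewrite (eval2_ext w0 cw _ _ w0_normal). lra.
Qed.

Lemma hat_rho_t (t : R) : IsHat (omega_t t) (rho_t t) (hatF Chat (rho_t t)).
Proof.
  replace Chat with (hatC (omega_t t) (rho_t t)).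
  - apply hatF_is_hat; [apply rho_t_form|]. now rewrite lamq_rho_t.
  - unfold hatC. now rewrite orient_omega_t, lamq_rho_t.
Qed.

Lemma rh0_hat : feq rh0 (hatF Chat rho0).
Proof. now apply hat_unique. Qed.

Lemma d_hat_rho_t (t : R) : feq (dF (hatF Chat (rho_t t))) (dF rh0).
Proof.
  intros S HS. rewrite (dF_ext rh0 _ _ rh0_hat).
  pose proof (U3_closed _ (hatF_deformation Chat rho0 (dF w0) t Hr25 dw0_U3) S HS) as E.
  rewrite dF_add, dF_scal in E. unfold fzero in E. unfold rho_t. lra.
Qed.

Lemma d_rh0_27 : supported (fun T => Nat.eqb T 27) (dF rh0).
Proof.
  intros T HT HT27. rewrite (dF_ext rh0 _ _ rh0_hat). revert T HT HT27.
  apply d_noE25; [apply grad3_form | now apply hatF_noE25].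
Qed.

Lemma sigma_omega_t (t : R) (S : nat) : (S < 64)%nat ->
  sigma4 (omega_t t) S = sigma4 w0 S + t * dF rh0 S.
Proof.
  intros HS. unfold sigma4, fscale.
  rewrite (wedge_ext _ _ _ _ (omega_t_normal t) (omega_t_normal t)),
    (wedge_ext w0 cw w0 cw w0_normal w0_normal), square_deform by auto.
  destruct (Nat.eqb S 27) eqn:E.
  - apply Nat.eqb_eq in E as ->. fold eta_volume. unfold rate.
    field. exact eta_volume_neq0.
  - rewrite d_rh0_27 by auto. ring.
Qed.

Lemma d_omega_t (t : R) (S : nat) : (S < 64)%nat -> dF (omega_t t) S = dF w0 S.
Proof.
  intros HS. unfold omega_t. rewrite dF_add, dF_scal, (eta_closed w0 S HS). unfold fzero. ring.
Qed.

Lemma rho_t_evolution (t : R) (S : nat) : (S < 64)%nat ->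
  derivable_pt_lim (fun s => rho_t s S) t (dF (omega_t t) S).
Proof. intros HS. rewrite d_omega_t by auto. apply derivable_affine. Qed.

Lemma sigma_t_evolution (t : R) (S : nat) : (S < 64)%nat ->
  derivable_pt_lim (fun s => sigma4 (omega_t s) S) t (dF (hatF Chat (rho_t t)) S).
Proof.
  intros HS. rewrite d_hat_rho_t by auto.
  replace (fun s => sigma4 (omega_t s) S) with (fun s => sigma4 w0 S + s * dF rh0 S)
    by (apply functional_extensionality; intros s; now rewrite sigma_omega_t).
  apply derivable_affine.
Qed.
End Flow.

Theorem proposition4p12 (w0 rho0 rh0 : Form) :
  HStructure w0 rho0 ->
  HalfFlat w0 rho0 ->
  (forall z1 z2 : Vec, inCentre z1 -> inCentre z2 -> eval2 w0 z1 z2 = 0) ->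
  IsHat w0 rho0 rh0 ->
  exists (w rho : R -> Form),
    feq (w 0) w0 /\ feq (rho 0) rho0 /\
    forall t : R,
      isForm 2 (w t) /\ isForm 3 (rho t) /\
      nondeg (w t) /\ stable (rho t) /\
      (* affine linear form of the solution *)
      feq (sigma4 (w t)) (fadd (sigma4 w0) (fscale t (dF rh0))) /\
      feq (rho t) (fadd rho0 (fscale t (dF w0))) /\
      (* evolution equations  rho' = d omega,  sigma' = d rhohat *)
      (forall S, (S < 64)%nat ->
         derivable_pt_lim (fun s => rho s S) t (dF (w t) S)) /\
      (exists rh, IsHat (w t) (rho t) rh /\
         forall S, (S < 64)%nat ->
           derivable_pt_lim (fun s => sigma4 (w s) S) t (dF rh S)).
Proof.
  intros [Hw2 [Hr3 [Hnd [Hst [_ [rh' [Hh' Hnorm]]]]]]] [Hdr _] Hc Hh.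
  pose proof (centre_coefficient w0 Hc) as Hw36.
  assert (Hlam : lamq rho0 <> 0) by now rewrite <- lam_lamq.
  pose proof (closed_noE25 rho0 Hr3 Hdr) as Hr25.
  pose proof (normalised_cube_neq0 w0 rho0 rh' Hr3 Hlam Hh' Hnorm) as Hcube.
  exists (omega_t w0 rh0), (rho_t w0 rho0).
  split; [intros S _; unfold omega_t, fadd, fscale; ring|].
  split; [intros S _; unfold rho_t, fadd, fscale; ring|].
  intros t. split; [|split; [|split; [|split; [|split; [|split; [|split]]]]]].
  - now apply omega_t_form.
  - now apply rho_t_form.
  - now apply omega_t_nondeg.
  - now apply rho_t_stable.
  - intros S HS. now apply (sigma_omega_t w0 rho0 rh0).
  - intros S _. reflexivity.
  - intros S HS. now apply rho_t_evolution.
  - eexists. split; [now apply hat_rho_t|]. intros S HS. now apply (sigma_t_evolution w0 rho0 rh0).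
Qed.
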